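(* Let $\lambda$ and $g$ be as in the context, let $q(-1)=-1$ and let $q(0)$ be the fixed point of $g$ with negative multiplier. Then \[ |g'(x)|\ge |g'(q(0))|>1 \] for all $x\in[q(-1),\hat{q}(0)]\cup[q(0),\hat{q}(-1)]$.
   Context: There is a unique constant $\lambda=2.5029\ldots$ and a unique infinitely (period-doubling) renormalizable analytic unimodal map $g:[-1,1]\to[-1,1]$ solving the Cvitanović–Feigenbaum–Coullet–Tresser functional equation $g(x)=-\lambda\, g^{2}(-x/\lambda)$ for $-1\le x\le1$ (here $g^2=g\circ g$). Here unimodal means: $-1$ is the unique fixed point with positive multiplier, $g(1)=-1$, and $g$ has a unique maximum at an interior nondegenerate critical point $c^{(0)}$. Moreover $g$ is analytic on a complex neighborhood of $[-1,1]$, even, concave on $[-c^{(1)},c^{(1)}]$ where $c^{(1)}=g(c^{(0)})$ is the critical value, satisfies $g(c^{(1)})=-c^{(1)}/\lambda$ and $g'(c^{(1)})=-\lambda$, and has negative Schwarzian derivative. For $x\ne c^{(0)}$ the reflection $\hat{x}$ is the point with $g(\hat x)=g(x)$, $\hat x\ne x$; and $\hat{c}^{(0)}=c^{(0)}$. *)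

From Stdlib Require Import Reals Lra.
From Coquelicot Require Import Coquelicot.
Open Scope R_scope.

Definition analytic_at (g : R -> R) (x : R) : Prop :=
  exists (a : nat -> R) (r : R), 0 < r /\
    forall y, Rabs (y - x) < r -> is_pseries a (y - x) (g y).

(* g is analytic on an open neighbourhood of [-1,1] (equivalent to g|[-1,1]
   extending holomorphically to a complex neighbourhood of [-1,1]). *)
Definition analytic_near_interval (g : R -> R) : Prop :=
  exists eps, 0 < eps /\ forall x, Rabs x < 1 + eps -> analytic_at g x.

Definition in_I (x : R) : Prop := -1 <= x <= 1.

Definition unimodal (g : R -> R) (c0 : R) : Prop :=
  (forall x, in_I x -> in_I (g x)) /\
  g (-1) = -1 /\ 0 < Derive g (-1) /\
  (forall x, in_I x -> g x = x -> 0 < Derive g x -> x = -1) /\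
  g 1 = -1 /\
  -1 < c0 < 1 /\
  Derive g c0 = 0 /\ Derive_n g 2 c0 <> 0 /\
  (forall x, in_I x -> x <> c0 -> g x < g c0) /\
  (forall x y, -1 <= x -> x < y -> y <= c0 -> g x < g y) /\
  (forall x y, c0 <= x -> x < y -> y <= 1 -> g y < g x).

Definition concave_on (g : R -> R) (a b : R) : Prop :=
  forall x y t, a <= x <= b -> a <= y <= b -> 0 <= t <= 1 ->
    t * g x + (1 - t) * g y <= g (t * x + (1 - t) * y).

Definition schwarzian (g : R -> R) (x : R) : R :=
  Derive_n g 3 x / Derive g x - 3 / 2 * (Derive_n g 2 x / Derive g x) ^ 2.

Definition cfct_fixed_point (lam : R) (g : R -> R) (c0 : R) : Prop :=
  2.5029 <= lam < 2.5030 /\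
  analytic_near_interval g /\
  (forall x, in_I x -> g x = - lam * g (g (- x / lam))) /\
  unimodal g c0 /\
  (forall x, in_I x -> g (- x) = g x) /\
  concave_on g (- g c0) (g c0) /\
  g (g c0) = - g c0 / lam /\
  Derive g (g c0) = - lam /\
  (forall x, in_I x -> x <> c0 -> schwarzian g x < 0).

(* y is the reflection \hat x of x w.r.t. the critical point c0:
   \hat c0 = c0, and for x <> c0, \hat x is the point of [-1,1] with
   g(\hat x) = g(x) and \hat x <> x. *)
Definition is_reflection (g : R -> R) (c0 x y : R) : Prop :=
  in_I y /\ g y = g x /\ (x = c0 -> y = c0) /\ (x <> c0 -> y <> x).

From Stdlib Require Import Reals Lra.
From Coquelicot Require Import Coquelicot.
Open Scope R_scope.

(* Evenness puts the critical point at 0, and negative Schwarzian derivative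
   gives a minimum principle both for [|g'|] on [[q(0), 1]] and for [(g o g)']
   on intervals in [(0, 1]] that [g] maps into [(0, 1]].  The latter yields
   [g'(q(0))^2 = (g o g)'(q(0)) > 1]; the functional equation then forces
   [q(0) = 1/lam] and [g'(-1) = g'(q(0))^2 = |g'(1)|], so the minimum principle
   for [|g'|] and the symmetry [|g'(-x)| = |g'(x)|] give the bound. *)

Lemma is_pseries_terms_bounded (a : nat -> R) (x l : R) :
  is_pseries a x l -> exists M, forall n, Rabs (a n * x ^ n) <= M.
Proof.
  intros H.
  assert (Hlim : is_lim_seq (fun k => scal (pow_n x k) (a k)) 0).
  { apply ex_series_lim_0. exists l. exact H. }
  destruct (filterlim_bounded (fun k => scal (pow_n x k) (a k))) as [M HM].
  { exists 0. exact Hlim. }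
  exists M. intros n. specialize (HM n).
  rewrite pow_n_pow in HM. rewrite Rmult_comm. exact HM.
Qed.

Lemma locally_of_ball (x e : R) (P : R -> Prop) :
  0 < e -> (forall t, Rabs (t - x) < e -> P t) -> locally x P.
Proof.
  intros He H. exists (mkposreal e He). exact H.
Qed.

Lemma is_pseries_ball_CV_radius (a : nat -> R) (F : R -> R) (x r : R) :
  0 < r -> (forall y, Rabs (y - x) < r -> is_pseries a (y - x) (F y)) ->
  forall z, Rabs z < r -> Rbar_lt (Rabs z) (CV_radius a).
Proof.
  intros Hr H z Hz.
  set (rho := (Rabs z + r) / 2).
  assert (Hrho : is_pseries a rho (F (x + rho))).
  { replace rho with ((x + rho) - x) at 1 by ring. apply H.
    replace (x + rho - x) with rho by ring. unfold rho.
    pose proof (Rabs_pos z). rewrite Rabs_pos_eq; lra. }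
  destruct (is_pseries_terms_bounded _ _ _ Hrho) as [M HM].
  apply Rbar_lt_le_trans with (Finite rho).
  - simpl. unfold rho. lra.
  - apply (proj1 (CV_radius_bounded a)). exists M. exact HM.
Qed.

Lemma analytic_at_ex_derive_n (g : R -> R) (x : R) :
  analytic_at g x -> forall k, ex_derive (Derive_n g k) x.
Proof.
  intros [a [r [Hr H]]] k.
  assert (Hrad := is_pseries_ball_CV_radius a g x r Hr H).
  assert (Heq : forall y, Rabs (y - x) < r ->
            Derive_n g k y = PSeries (PS_derive_n k a) (y - x)).
  { intros y Hy.
    rewrite (Derive_n_ext_loc g (fun t => PSeries a (t + - x))).
    - rewrite Derive_n_comp_trans. apply Derive_n_PSeries, Hrad, Hy.
    - apply locally_of_ball with (r - Rabs (y - x)); [lra |].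
      intros t Ht. symmetry. apply is_pseries_unique, H.
      replace (t - x) with ((t - y) + (y - x)) by ring.
      eapply Rle_lt_trans; [apply Rabs_triang | lra]. }
  apply ex_derive_ext_loc with (fun t => PSeries (PS_derive_n k a) (t - x)).
  - apply locally_of_ball with r; [exact Hr |].
    intros t Ht. symmetry. apply Heq, Ht.
  - apply (ex_derive_comp (PSeries (PS_derive_n k a)) (fun t => t - x)).
    + apply ex_derive_PSeries. rewrite CV_radius_derive_n. apply Hrad.
      replace (x - x) with 0 by ring. rewrite Rabs_R0. exact Hr.
    + auto_derive. exact I.
Qed.

Lemma analytic_near_interval_ex_derive_n (g : R -> R) :
  analytic_near_interval g ->
  forall k x, -1 <= x <= 1 -> ex_derive (Derive_n g k) x.
Proof.
  intros [eps [Heps Han]] k x Hx.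
  apply analytic_at_ex_derive_n, Han.
  assert (Rabs x <= 1) by (apply Rabs_le; lra). lra.
Qed.

Lemma is_derive_lt0_locally_decr (f : R -> R) (x l : R) :
  is_derive f x l -> l < 0 ->
  exists d, 0 < d /\ (forall z, x < z < x + d -> f z < f x) /\
                     (forall z, x - d < z < x -> f x < f z).
Proof.
  intros Hd Hl. apply is_derive_Reals in Hd.
  destruct (Hd (- l / 2)) as [d Hdel]; [lra |].
  exists d. split; [apply cond_pos |].
  assert (Hquot : forall z, z <> x -> Rabs (z - x) < d ->
            (f z - f x) / (z - x) < l / 2).
  { intros z Hzx Hz.
    specialize (Hdel (z - x) ltac:(lra) Hz). replace (x + (z - x)) with z in Hdel by ring.
    apply Rabs_def2 in Hdel. lra. }
  split; intros z Hz.
  - specialize (Hquot z ltac:(lra) ltac:(rewrite Rabs_pos_eq; lra)).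
    replace (f z) with (f x + (f z - f x) / (z - x) * (z - x)) by (field; lra).
    nra.
  - specialize (Hquot z ltac:(lra) ltac:(rewrite Rabs_left; lra)).
    replace (f z) with (f x + (f z - f x) / (z - x) * (z - x)) by (field; lra).
    nra.
Qed.

Lemma is_derive_ge0_incr_right (f : R -> R) (x l d : R) :
  0 < d -> is_derive f x l -> (forall z, x < z < x + d -> f x < f z) -> 0 <= l.
Proof.
  intros Hd Hf Hincr. apply Rnot_lt_le. intros Hl.
  destruct (is_derive_lt0_locally_decr f x l Hf Hl) as [d' [Hd' [Hdecr _]]].
  set (z := x + Rmin d d' / 2).
  assert (Hm : 0 < Rmin d d') by (apply Rmin_glb_lt; lra).
  assert (Rmin d d' <= d) by apply Rmin_l.
  assert (Rmin d d' <= d') by apply Rmin_r.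
  specialize (Hincr z ltac:(unfold z; lra)). specialize (Hdecr z ltac:(unfold z; lra)).
  lra.
Qed.

Lemma is_derive_le0_decr_left (f : R -> R) (x l d : R) :
  0 < d -> is_derive f x l -> (forall z, x - d < z < x -> f x < f z) -> l <= 0.
Proof.
  intros Hd Hf Hdecr.
  assert (Hf' : is_derive (fun t => f (- t)) (- x) (- l)).
  { replace (- l) with (scal (-1) l) by (unfold scal; simpl; unfold mult; simpl; ring).
    apply (is_derive_comp f Ropp); [now rewrite Ropp_involutive |].
    apply (is_derive_ext (fun t => - t)); [reflexivity |]. auto_derive; [exact I | ring]. }
  enough (0 <= - l) by lra.
  apply (is_derive_ge0_incr_right _ _ _ d Hd Hf').
  intros z Hz. rewrite Ropp_involutive. apply Hdecr. lra.
Qed.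

Section MinimumPrinciple.

Variables (h h1 h2 : R -> R) (a b : R).
Hypothesis h_cont : forall x, a <= x <= b -> continuity_pt h x.
Hypothesis h_deriv : forall x, a < x < b -> is_derive h x (h1 x).
Hypothesis h1_deriv : forall x, a < x < b -> is_derive h1 x (h2 x).
Hypothesis h_crit : forall x, a < x < b -> h1 x = 0 -> h2 x < 0.

Lemma no_interior_min (y : R) :
  a < y < b -> ~ (forall z, a <= z <= b -> h y <= h z).
Proof.
  intros Hy Hmin.
  assert (Hcrit : h1 y = 0).
  { assert (pr : derivable_pt h y) by (exists (h1 y); apply is_derive_Reals, h_deriv, Hy).
    rewrite <- (derive_pt_eq_0 h y (h1 y) pr) by apply is_derive_Reals, h_deriv, Hy.
    apply (deriv_minimum h a b y pr); try lra.
    intros z Hz1 Hz2. apply Hmin. lra. }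
  destruct (is_derive_lt0_locally_decr h1 y (h2 y) (h1_deriv y Hy) (h_crit y Hy Hcrit))
    as [d [Hd [Hdecr _]]].
  set (z := Rmin (y + d / 2) ((y + b) / 2)).
  assert (Hz : y < z < y + d /\ z < b) by (unfold z, Rmin; destruct Rle_dec; lra).
  destruct (MVT_cor2 h h1 y z) as [c [Hc1 Hc2]]; [lra | |].
  { intros c Hc. apply is_derive_Reals, h_deriv. lra. }
  assert (h1 c < h1 y) by (apply Hdecr; lra).
  assert (h y <= h z) by (apply Hmin; lra).
  nra.
Qed.

Lemma minimum_principle (x : R) :
  a < b -> a < x < b -> Rmin (h a) (h b) < h x.
Proof.
  intros Hab Hx. apply Rnot_le_lt. intros Hle.
  destruct (continuity_ab_min h a b (Rlt_le _ _ Hab) h_cont) as [m [Hmin Hm]].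
  assert (Hxm : h x <= h m).
  { destruct (Req_dec m a) as [->|Ha]; [eapply Rle_trans; [exact Hle | apply Rmin_l] |].
    destruct (Req_dec m b) as [->|Hb]; [eapply Rle_trans; [exact Hle | apply Rmin_r] |].
    exfalso. apply (no_interior_min m); [lra | exact Hmin]. }
  apply (no_interior_min x Hx). intros z Hz. specialize (Hmin z Hz). lra.
Qed.

End MinimumPrinciple.

Lemma continuous_eq_of_filter (F : (R -> Prop) -> Prop) {FF : ProperFilter F}
  (f1 f2 : R -> R) (x : R) :
  filter_le F (locally x) -> continuous f1 x -> continuous f2 x ->
  F (fun y => f1 y = f2 y) -> f1 x = f2 x.
Proof.
  intros HF H1 H2 Heq.
  apply (filterlim_locally_unique (F := F) f1).
  - exact (filterlim_filter_le_1 _ HF H1).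
  - apply filterlim_ext_loc with f2.
    + apply filter_imp with (2 := Heq). intros y E. now symmetry.
    + exact (filterlim_filter_le_1 _ HF H2).
Qed.

Lemma continuous_eq_right (f1 f2 : R -> R) (x d : R) :
  0 < d -> continuous f1 x -> continuous f2 x ->
  (forall y, x < y < x + d -> f1 y = f2 y) -> f1 x = f2 x.
Proof.
  intros Hd H1 H2 Heq. apply (continuous_eq_of_filter (at_right x)); auto.
  - apply filter_le_within.
  - exists (mkposreal d Hd). intros y Hy Hxy. apply Heq.
    change (Rabs (y - x) < d) in Hy. apply Rabs_def2 in Hy. lra.
Qed.

Lemma continuous_eq_left (f1 f2 : R -> R) (x d : R) :
  0 < d -> continuous f1 x -> continuous f2 x ->
  (forall y, x - d < y < x -> f1 y = f2 y) -> f1 x = f2 x.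
Proof.
  intros Hd H1 H2 Heq. apply (continuous_eq_of_filter (at_left x)); auto.
  - apply filter_le_within.
  - exists (mkposreal d Hd). intros y Hy Hxy. apply Heq.
    change (Rabs (y - x) < d) in Hy. apply Rabs_def2 in Hy. lra.
Qed.

Lemma is_derive_Derive_comp_self (g : R -> R) (t : R) :
  ex_derive g t -> ex_derive (Derive g) t -> ex_derive (Derive g) (g t) ->
  is_derive (fun t => Derive g (g t) * Derive g t) t
    (Derive_n g 2 (g t) * Derive g t ^ 2 + Derive g (g t) * Derive_n g 2 t).
Proof.
  intros.
  auto_derive; simpl; repeat change (fun x : R => ?f x) with f; [tauto | ring].
Qed.

Lemma is_derive_Derive2_comp_self (g : R -> R) (t : R) :
  ex_derive g t -> ex_derive (Derive g) t -> ex_derive (Derive g) (g t) ->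
  ex_derive (Derive_n g 2) t -> ex_derive (Derive_n g 2) (g t) ->
  is_derive (fun t => Derive_n g 2 (g t) * Derive g t ^ 2 + Derive g (g t) * Derive_n g 2 t) t
    (Derive_n g 3 (g t) * Derive g t ^ 3 + 3 * Derive_n g 2 (g t) * Derive g t * Derive_n g 2 t
     + Derive g (g t) * Derive_n g 3 t).
Proof.
  intros.
  auto_derive; simpl; repeat change (fun x : R => ?f x) with f; [tauto | ring].
Qed.

(* With [A, B, C] the first three derivatives of [g] at [g x] and [p, q, r]
   those at [x], the chain rule for the Schwarzian says that at a zero of
   [(g o g)''] one has [(g o g)''' = (S g (g x) * p^2 + S g x) * A p]. *)
Lemma schwarzian_comp_crit_neg (A B C p q r : R) :
  0 < A * p ->
  C / A - 3 / 2 * (B / A) ^ 2 < 0 -> r / p - 3 / 2 * (q / p) ^ 2 < 0 ->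
  B * p ^ 2 + A * q = 0 ->
  C * p ^ 3 + 3 * B * p * q + A * r < 0.
Proof.
  intros HAp HSA HSp Hcrit.
  assert (HA : A <> 0) by (intros ->; lra).
  assert (Hp : p <> 0) by (intros ->; lra).
  set (u := B / A) in *. set (c := C / A) in *. set (s := r / p) in *.
  assert (EB : B = u * A) by (unfold u; field; exact HA).
  assert (EC : C = c * A) by (unfold c; field; exact HA).
  assert (Er : r = s * p) by (unfold s; field; exact Hp).
  assert (Eq : q = - u * p ^ 2).
  { apply Rmult_eq_reg_l with A; [| exact HA]. rewrite EB in Hcrit. nra. }
  assert (Eqp : q / p = - u * p) by (rewrite Eq; field; exact Hp).
  rewrite Eqp in HSp.
  replace (C * p ^ 3 + 3 * B * p * q + A * r)
    with ((A * p) * ((c - 3 / 2 * u ^ 2) * p ^ 2 + (s - 3 / 2 * (- u * p) ^ 2)))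
    by (rewrite EC, Er, Eq, EB; field).
  assert (0 < p ^ 2) by (apply pow2_gt_0; exact Hp).
  assert ((c - 3 / 2 * u ^ 2) * p ^ 2 < 0) by (apply Rmult_neg_pos; lra).
  nra.
Qed.

Lemma Derive_functional_equation (g : R -> R) (lam y : R) : lam <> 0 ->
  locally y (fun t => g t = - lam * g (g (- t / lam))) ->
  ex_derive g (- y / lam) -> ex_derive g (g (- y / lam)) ->
  Derive g y = Derive g (g (- y / lam)) * Derive g (- y / lam).
Proof.
  intros Hl Hloc H1 H2. rewrite (Derive_ext_loc _ _ _ Hloc). apply is_derive_unique.
  auto_derive; simpl; repeat change (fun x : R => ?f x) with f; [tauto |].
  unfold Rdiv. field. exact Hl.
Qed.

Lemma Derive_even (g : R -> R) (y : R) :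
  locally y (fun t => g t = g (- t)) -> ex_derive g (- y) ->
  Derive g y = - Derive g (- y).
Proof.
  intros Hloc H1. rewrite (Derive_ext_loc _ _ _ Hloc). apply is_derive_unique.
  auto_derive; simpl; repeat change (fun x : R => ?f x) with f; [exact H1 | ring].
Qed.

Lemma unimodal_even_crit_eq0 (g : R -> R) (c0 : R) :
  unimodal g c0 -> (forall x, in_I x -> g (- x) = g x) -> c0 = 0.
Proof.
  intros (_ & _ & _ & _ & _ & Hc0 & _ & _ & Hmax & _) Hev.
  destruct (Req_dec c0 0) as [E | E]; [exact E | exfalso].
  assert (Hlt : g (- c0) < g c0) by (apply Hmax; unfold in_I; lra).
  rewrite Hev in Hlt by (unfold in_I; lra). lra.
Qed.

Section FeigenbaumExpansion.

Variables (lam : R) (g : R -> R) (q0 : R).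

Hypothesis lam_pos : 0 < lam.
Hypothesis g_smooth : forall k x, -1 <= x <= 1 -> ex_derive (Derive_n g k) x.
Hypothesis g_maps_I : forall x, in_I x -> in_I (g x).
Hypothesis g_fe : forall x, in_I x -> g x = - lam * g (g (- x / lam)).
Hypothesis g_even : forall x, in_I x -> g (- x) = g x.
Hypothesis g_m1 : g (-1) = -1.
Hypothesis g_fix_pos_mult : forall x, in_I x -> g x = x -> 0 < Derive g x -> x = -1.
Hypothesis g_incr : forall x y, -1 <= x -> x < y -> y <= 0 -> g x < g y.
Hypothesis g_decr : forall x y, 0 <= x -> x < y -> y <= 1 -> g y < g x.
Hypothesis g_crit : Derive g 0 = 0.
Hypothesis g_crit_value : g (g 0) = - g 0 / lam.
Hypothesis g_schwarzian : forall x, in_I x -> x <> 0 -> schwarzian g x < 0.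
Hypothesis q0_I : in_I q0.
Hypothesis q0_fix : g q0 = q0.
Hypothesis q0_mult : Derive g q0 < 0.

Let g_I (x : R) : -1 <= x <= 1 -> -1 <= g x <= 1 := g_maps_I x.

Let ex_derive_g (x : R) : -1 <= x <= 1 -> ex_derive g x := g_smooth 0 x.
Let ex_derive_Derive_g (x : R) : -1 <= x <= 1 -> ex_derive (Derive g) x := g_smooth 1 x.
Let ex_derive_Derive2_g (x : R) : -1 <= x <= 1 -> ex_derive (Derive_n g 2) x := g_smooth 2 x.

Lemma continuous_g (x : R) : -1 <= x <= 1 -> continuous g x.
Proof. intros Hx. exact (ex_derive_continuous _ x (ex_derive_g x Hx)). Qed.

Lemma continuous_Derive_g (x : R) : -1 <= x <= 1 -> continuous (Derive g) x.
Proof. intros Hx. exact (ex_derive_continuous _ x (ex_derive_Derive_g x Hx)). Qed.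

Lemma g_1 : g 1 = -1.
Proof.
  rewrite <- g_m1, <- (g_even (-1)) by (unfold in_I; lra). f_equal. ring.
Qed.

(* Rocq's [x / 0 = 0] makes the Schwarzian vanish at a critical point. *)
Lemma Derive_g_neq0 (x : R) : in_I x -> x <> 0 -> Derive g x <> 0.
Proof.
  intros Hx Hx0 E. generalize (g_schwarzian x Hx Hx0).
  unfold schwarzian. rewrite E. unfold Rdiv. rewrite Rinv_0. lra.
Qed.

Lemma Derive_g_pos (x : R) : -1 <= x < 0 -> 0 < Derive g x.
Proof.
  intros Hx.
  assert (0 <= Derive g x).
  { apply (is_derive_ge0_incr_right g x _ (- x)); [lra | |].
    - apply Derive_correct, ex_derive_g. lra.
    - intros z Hz. apply g_incr; lra. }
  assert (Derive g x <> 0) by (apply Derive_g_neq0; unfold in_I; lra).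
  lra.
Qed.

Lemma Derive_g_neg (x : R) : 0 < x <= 1 -> Derive g x < 0.
Proof.
  intros Hx.
  assert (Derive g x <= 0).
  { apply (is_derive_le0_decr_left g x _ x); [lra | |].
    - apply Derive_correct, ex_derive_g. lra.
    - intros z Hz. apply g_decr; lra. }
  assert (Derive g x <> 0) by (apply Derive_g_neq0; unfold in_I; lra).
  lra.
Qed.

Lemma g_inj_nonpos (x y : R) : -1 <= x <= 0 -> -1 <= y <= 0 -> g x = g y -> x = y.
Proof.
  intros Hx Hy E. destruct (Rtotal_order x y) as [H | [H | H]]; [| exact H |].
  - assert (g x < g y) by (apply g_incr; lra). lra.
  - assert (g y < g x) by (apply g_incr; lra). lra.
Qed.

Lemma g_inj_nonneg (x y : R) : 0 <= x <= 1 -> 0 <= y <= 1 -> g x = g y -> x = y.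
Proof.
  intros Hx Hy E. destruct (Rtotal_order x y) as [H | [H | H]]; [| exact H |].
  - assert (g y < g x) by (apply g_decr; lra). lra.
  - assert (g x < g y) by (apply g_decr; lra). lra.
Qed.

Lemma is_reflection_opp (x y : R) : in_I x -> x <> 0 -> is_reflection g 0 x y -> y = - x.
Proof.
  intros Hx Hx0 (Hy & Hgy & _ & Hyx). specialize (Hyx Hx0). unfold in_I in *.
  assert (Hgx : g (- x) = g y) by (rewrite g_even by (unfold in_I; lra); now symmetry).
  destruct (Rlt_or_le x 0) as [Hneg | Hpos].
  - destruct (Rle_or_lt y 0).
    + exfalso. apply Hyx, g_inj_nonpos; lra.
    + symmetry. apply g_inj_nonneg; lra.
  - destruct (Rle_or_lt 0 y).
    + exfalso. apply Hyx, g_inj_nonneg; lra.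
    + symmetry. apply g_inj_nonpos; lra.
Qed.

Lemma q0_bounds : 0 < q0 < 1.
Proof.
  unfold in_I in q0_I. split.
  - destruct (Rtotal_order q0 0) as [H | [H | H]]; [| | exact H].
    + pose proof (Derive_g_pos q0 ltac:(lra)). lra.
    + rewrite H in q0_mult. lra.
  - destruct (Req_dec q0 1) as [E | E]; [| lra].
    rewrite E, g_1 in q0_fix. lra.
Qed.

Lemma q0_lt_g0 : q0 < g 0.
Proof.
  pose proof q0_bounds. rewrite <- q0_fix at 1. apply g_decr; lra.
Qed.

(* Otherwise [- lam * q0] would be a second fixed point with positive multiplier. *)
Lemma inv_lam_le_q0 : 1 / lam <= q0.
Proof.
  pose proof q0_bounds. apply Rnot_lt_le. intros Hlt.
  set (y := - lam * q0).
  assert (Hy : -1 < y < 0).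
  { unfold y. split; [| nra].
    apply (Rmult_lt_compat_l lam) in Hlt; [| exact lam_pos].
    replace (lam * (1 / lam)) with 1 in Hlt by (field; lra). lra. }
  assert (Hfix : g y = y).
  { rewrite g_fe by (unfold in_I; lra).
    replace (- y / lam) with q0 by (unfold y; field; lra).
    rewrite !q0_fix. reflexivity. }
  pose proof (g_fix_pos_mult y ltac:(unfold in_I; lra) Hfix (Derive_g_pos y ltac:(lra))).
  lra.
Qed.

Lemma g_g0_neg : g (g 0) < 0.
Proof.
  pose proof q0_bounds. pose proof q0_lt_g0.
  rewrite g_crit_value. unfold Rdiv. rewrite Ropp_mult_distr_l_reverse.
  apply Ropp_lt_gt_0_contravar, Rdiv_lt_0_compat; lra.
Qed.

Lemma g_root : exists xs, q0 < xs < 1 /\ xs < g 0 /\ g xs = 0.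
Proof.
  pose proof q0_bounds. pose proof q0_lt_g0.
  destruct (Ranalysis5.IVT_interv (fun t => - g t) q0 1) as [xs [Hxs Hgxs]].
  - intros t Ht. apply continuity_pt_opp, continuity_pt_filterlim, continuous_g. lra.
  - lra.
  - rewrite q0_fix. lra.
  - rewrite g_1. lra.
  - assert (Hg : g xs = 0) by lra.
    assert (Hxs' : q0 < xs < 1).
    { split; [destruct (Req_dec xs q0) as [E | E] | destruct (Req_dec xs 1) as [E | E]];
        try lra; rewrite E in Hg; [rewrite q0_fix in Hg | rewrite g_1 in Hg]; lra. }
    exists xs. split; [exact Hxs' | split; [| exact Hg]].
    apply Rnot_le_lt. intros Hle. pose proof g_g0_neg as Hgg0.
    destruct (Req_dec (g 0) xs) as [E | E]; [rewrite E in Hgg0; lra |].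
    assert (g xs < g (g 0)) by (apply g_decr; lra). lra.
Qed.

Let dgg (t : R) : R := Derive g (g t) * Derive g t.
Let dgg' (t : R) : R := Derive_n g 2 (g t) * Derive g t ^ 2 + Derive g (g t) * Derive_n g 2 t.
Let dgg'' (t : R) : R :=
  Derive_n g 3 (g t) * Derive g t ^ 3 + 3 * Derive_n g 2 (g t) * Derive g t * Derive_n g 2 t
  + Derive g (g t) * Derive_n g 3 t.

Lemma is_derive_dgg (t : R) : -1 <= t <= 1 -> is_derive dgg t (dgg' t).
Proof.
  intros Ht. apply is_derive_Derive_comp_self;
    [apply ex_derive_g | apply ex_derive_Derive_g | apply ex_derive_Derive_g, g_I]; exact Ht.
Qed.

Lemma is_derive_dgg' (t : R) : -1 <= t <= 1 -> is_derive dgg' t (dgg'' t).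
Proof.
  intros Ht. apply is_derive_Derive2_comp_self;
    [apply ex_derive_g | apply ex_derive_Derive_g | apply ex_derive_Derive_g, g_I
    | apply ex_derive_Derive2_g | apply ex_derive_Derive2_g, g_I]; exact Ht.
Qed.

Lemma continuous_dgg (t : R) : -1 <= t <= 1 -> continuous dgg t.
Proof. intros Ht. exact (ex_derive_continuous _ t (ex_intro _ _ (is_derive_dgg t Ht))). Qed.

Lemma dgg_minimum_principle (a b x : R) :
  0 < a -> a < x < b -> b <= 1 -> (forall t, a < t < b -> 0 < g t) ->
  Rmin (dgg a) (dgg b) < dgg x.
Proof.
  intros Ha Hx Hb Hpos.
  apply (minimum_principle dgg dgg' dgg''); [| | | | lra | exact Hx].
  - intros t Ht. apply continuity_pt_filterlim, continuous_dgg. lra.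
  - intros t Ht. apply is_derive_dgg. lra.
  - intros t Ht. apply is_derive_dgg'. lra.
  - intros t Ht Hcrit.
    assert (Hgt : 0 < g t <= 1) by (split; [now apply Hpos | apply g_I; lra]).
    apply schwarzian_comp_crit_neg; [| | | exact Hcrit].
    + apply Rmult_neg_neg; apply Derive_g_neg; lra.
    + apply (g_schwarzian (g t)); [unfold in_I |]; lra.
    + apply (g_schwarzian t); [unfold in_I |]; lra.
Qed.

Lemma gg_sub_id_MVT (u v : R) : -1 <= u -> u < v -> v <= 1 ->
  exists c, u < c < v /\ g (g v) - v - (g (g u) - u) = (dgg c - 1) * (v - u).
Proof.
  intros Hu Huv Hv.
  destruct (MVT_cor2 (fun t => g (g t) - t) (fun t => dgg t - 1) u v Huv) as [c [Hc Hcuv]].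
  - intros c Hc. apply is_derive_Reals. unfold dgg.
    assert (ex_derive g c) by (apply ex_derive_g; lra).
    assert (ex_derive g (g c)) by (apply ex_derive_g, g_I; lra).
    auto_derive; simpl; repeat change (fun x : R => ?f x) with f; [tauto | ring].
  - exists c. split; [exact Hcuv | exact Hc].
Qed.

(* [g o g - id] is negative at 0, vanishes at [q0] and is positive at the zero
   of [g]: by the mean value theorem [(g o g)' > 1] on both sides of [q0], and
   the minimum principle carries this to [q0]. *)
Lemma Derive_g_q0_sq_gt1 : 1 < Derive g q0 ^ 2.
Proof.
  pose proof q0_bounds. pose proof g_g0_neg.
  destruct g_root as (xs & Hxs & Hxs0 & Hgxs).
  destruct (gg_sub_id_MVT 0 q0) as (xi & Hxi & Exi); [lra | lra | lra |].
  rewrite !q0_fix in Exi.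
  destruct (gg_sub_id_MVT q0 xs) as (ze & Hze & Eze); [lra | lra | lra |].
  rewrite !q0_fix, Hgxs in Eze.
  assert (1 < dgg xi) by nra.
  assert (1 < dgg ze) by nra.
  assert (Hmin : Rmin (dgg xi) (dgg ze) < dgg q0).
  { apply dgg_minimum_principle; [lra | lra | lra |].
    intros t Ht. rewrite <- Hgxs. apply g_decr; lra. }
  assert (1 < Rmin (dgg xi) (dgg ze)) by (apply Rmin_glb_lt; lra).
  assert (dgg q0 = Derive g q0 ^ 2) by (unfold dgg; rewrite q0_fix; ring).
  lra.
Qed.

(* The functional equation at [-1] makes [1 / lam] a fixed point of [g o g];
   a second one in [(1 / lam, q0)] would force [(g o g)' = 1] in between. *)
Lemma q0_eq_inv_lam : q0 = 1 / lam.
Proof.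
  pose proof q0_bounds. pose proof g_g0_neg. pose proof Derive_g_q0_sq_gt1.
  destruct (Rle_lt_or_eq_dec _ _ inv_lam_le_q0) as [Hlt | E]; [exfalso | now symmetry].
  assert (Hinv : 0 < 1 / lam) by (apply Rdiv_lt_0_compat; lra).
  assert (Hfix : g (g (1 / lam)) = 1 / lam).
  { pose proof (g_fe (-1) ltac:(unfold in_I; lra)) as Hfe.
    replace (- -1 / lam) with (1 / lam) in Hfe by (field; lra).
    rewrite g_m1 in Hfe. apply (Rmult_eq_reg_l lam); [| lra].
    replace (lam * (1 / lam)) with 1 by (field; lra). lra. }
  destruct (gg_sub_id_MVT 0 (1 / lam)) as (xi & Hxi & Exi); [lra | lra | lra |].
  rewrite Hfix in Exi.
  destruct (gg_sub_id_MVT (1 / lam) q0) as (s & Hs & Es); [lra | lra | lra |].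
  rewrite Hfix, !q0_fix in Es.
  assert (1 < dgg xi) by nra.
  assert (Hs1 : dgg s = 1).
  { assert (Hprod : (dgg s - 1) * (q0 - 1 / lam) = 0) by lra.
    apply Rmult_integral in Hprod. lra. }
  assert (Hmin : Rmin (dgg xi) (dgg q0) < dgg s).
  { apply dgg_minimum_principle; [lra | lra | lra |].
    intros t Ht. assert (g q0 < g t) by (apply g_decr; lra). lra. }
  assert (1 < dgg q0) by (unfold dgg; rewrite q0_fix; nra).
  assert (1 < Rmin (dgg xi) (dgg q0)) by (apply Rmin_glb_lt; lra).
  lra.
Qed.

Lemma Derive_g_m1 : Derive g (-1) = Derive g q0 ^ 2.
Proof.
  pose proof q0_bounds. pose proof q0_eq_inv_lam as Hq0.
  assert (Hlam_inv : 0 < / lam) by (apply Rinv_0_lt_compat; lra).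
  assert (Hm1 : - -1 / lam = q0) by (rewrite Hq0; field; lra).
  transitivity (dgg (- -1 / lam)); [| unfold dgg; rewrite Hm1, q0_fix; ring].
  apply (continuous_eq_right (Derive g) (fun y => dgg (- y / lam)) (-1) 1); [lra | | |].
  - apply continuous_Derive_g. lra.
  - apply (continuous_comp (fun y => - y / lam) dgg).
    + apply (ex_derive_continuous (fun y => - y / lam)). auto_derive. lra.
    + rewrite Hm1. apply continuous_dgg. lra.
  - intros y Hy.
    assert (Hyl : 0 < - y / lam < q0).
    { rewrite Hq0. unfold Rdiv. nra. }
    apply Derive_functional_equation; [lra | | apply ex_derive_g; lra
                                      | apply ex_derive_g, g_I; lra].
    apply locally_of_ball with (y + 1); [lra |].
    intros t Ht. apply Rabs_def2 in Ht. apply g_fe. unfold in_I. lra.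
Qed.

Lemma Derive_g_odd (y : R) : -1 < y < 1 -> Derive g y = - Derive g (- y).
Proof.
  intros Hy. apply Derive_even; [| apply ex_derive_g; lra].
  apply locally_of_ball with (Rmin (1 - y) (1 + y)); [apply Rmin_glb_lt; lra |].
  intros t Ht. apply Rabs_def2 in Ht.
  assert (Rmin (1 - y) (1 + y) <= 1 - y) by apply Rmin_l.
  assert (Rmin (1 - y) (1 + y) <= 1 + y) by apply Rmin_r.
  symmetry. apply g_even. unfold in_I. lra.
Qed.

Lemma Derive_g_1 : Derive g 1 = - Derive g (-1).
Proof.
  apply (continuous_eq_left (Derive g) (fun y => - Derive g (- y)) 1 1); [lra | | |].
  - apply continuous_Derive_g. lra.
  - apply (ex_derive_continuous (fun y => - Derive g (- y))).
    auto_derive. apply ex_derive_Derive_g. lra.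
  - intros y Hy. apply Derive_g_odd. lra.
Qed.

Lemma Rabs_Derive_g_opp (x : R) : -1 <= x <= 1 -> Rabs (Derive g (- x)) = Rabs (Derive g x).
Proof.
  intros Hx.
  destruct (Req_dec x (-1)) as [-> | Hm1].
  { replace (- -1) with 1 by ring. rewrite Derive_g_1, Rabs_Ropp. reflexivity. }
  destruct (Req_dec x 1) as [-> | H1].
  { rewrite Derive_g_1, Rabs_Ropp. reflexivity. }
  rewrite (Derive_g_odd x), Rabs_Ropp by lra. reflexivity.
Qed.

Lemma Derive3_g_pos_at_crit (x : R) : 0 < x <= 1 -> Derive_n g 2 x = 0 -> 0 < Derive_n g 3 x.
Proof.
  intros Hx Hcrit.
  pose proof (Derive_g_neg x Hx) as Hneg.
  pose proof (g_schwarzian x ltac:(unfold in_I; lra) ltac:(lra)) as S.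
  unfold schwarzian in S. rewrite Hcrit in S.
  replace ((0 / Derive g x) ^ 2) with 0 in S by (unfold Rdiv; ring).
  assert (E : Derive_n g 3 x = Derive_n g 3 x / Derive g x * Derive g x) by (field; lra).
  rewrite E. nra.
Qed.

Lemma Rabs_Derive_g_ge_q0 (x : R) : q0 <= x <= 1 -> Rabs (Derive g x) >= Rabs (Derive g q0).
Proof.
  intros Hx. pose proof q0_bounds. pose proof Derive_g_q0_sq_gt1.
  assert (Hq0 : Rabs (Derive g q0) = - Derive g q0) by (apply Rabs_left; lra).
  assert (Hd1 : Derive g 1 = - Derive g q0 ^ 2) by (rewrite Derive_g_1, Derive_g_m1; ring).
  rewrite Hq0, Rabs_left by (apply Derive_g_neg; lra).
  destruct (Req_dec x q0) as [-> | Hxq0]; [lra |].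
  destruct (Req_dec x 1) as [-> | Hx1]; [rewrite Hd1; nra |].
  assert (Hmin : Rmin (- Derive g q0) (- Derive g 1) < - Derive g x).
  { apply (minimum_principle (fun t => - Derive g t) (fun t => - Derive_n g 2 t)
                             (fun t => - Derive_n g 3 t)); [| | | | lra | lra].
    - intros t Ht. apply continuity_pt_opp, continuity_pt_filterlim, continuous_Derive_g. lra.
    - intros t Ht.
      exact (is_derive_opp _ _ _ (Derive_correct _ _ (ex_derive_Derive_g t ltac:(lra)))).
    - intros t Ht.
      exact (is_derive_opp _ _ _ (Derive_correct _ _ (ex_derive_Derive2_g t ltac:(lra)))).
    - intros t Ht Hcrit. pose proof (Derive3_g_pos_at_crit t ltac:(lra) ltac:(lra)). lra. }
  rewrite Hd1 in Hmin. revert Hmin. unfold Rmin. destruct Rle_dec; nra.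
Qed.

Lemma Rabs_Derive_g_expanding (qh0 qhm1 : R) :
  is_reflection g 0 q0 qh0 -> is_reflection g 0 (-1) qhm1 ->
  Rabs (Derive g q0) > 1 /\
  forall x, (-1 <= x <= qh0 \/ q0 <= x <= qhm1) -> Rabs (Derive g x) >= Rabs (Derive g q0).
Proof.
  intros Hqh0 Hqhm1. pose proof q0_bounds. pose proof Derive_g_q0_sq_gt1.
  assert (Eqh0 : qh0 = - q0).
  { apply is_reflection_opp; [unfold in_I; lra | lra | exact Hqh0]. }
  assert (Eqhm1 : qhm1 = 1).
  { replace 1 with (- -1) by ring. apply is_reflection_opp; [unfold in_I; lra | lra | exact Hqhm1]. }
  subst qh0 qhm1.
  split; [rewrite Rabs_left; nra |].
  intros x [Hx | Hx]; [rewrite <- Rabs_Derive_g_opp by lra |]; apply Rabs_Derive_g_ge_q0; lra.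
Qed.

End FeigenbaumExpansion.

Theorem mainTheorem3 (lam : R) (g : R -> R) (c0 : R)
  (Hg : cfct_fixed_point lam g c0)
  (q0 : R) (Hq0I : in_I q0) (Hq0fix : g q0 = q0) (Hq0neg : Derive g q0 < 0)
  (qh0 qhm1 : R)
  (Hqh0 : is_reflection g c0 q0 qh0)
  (Hqhm1 : is_reflection g c0 (-1) qhm1) :
  Rabs (Derive g q0) > 1 /\
  forall x, (-1 <= x <= qh0 \/ q0 <= x <= qhm1) ->
    Rabs (Derive g x) >= Rabs (Derive g q0).
Proof.
  destruct Hg as (Hlam & Han & Hfe & Hun & Hev & _ & Hcv & _ & Hsch).
  assert (c0 = 0) by exact (unimodal_even_crit_eq0 g c0 Hun Hev). subst c0.
  destruct Hun as (Hmap & Hm1 & _ & Hfix & _ & _ & Hcrit & _ & _ & Hinc & Hdec).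
  pose proof (analytic_near_interval_ex_derive_n g Han) as Hsmooth.
  eapply Rabs_Derive_g_expanding; try eassumption. lra.
Qed.
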